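(* Let $r$ and $t$ be positive integers with $r\ge 3$ and $2\le t\le \frac{r+3}{3}$, and let $n=3r-t$. If $\rho_2(K(n,r))\ge 4$, then there exists a $2$-packing $S$ of $K(n,r)$ with $|S|=4$ such that $i_x(S)\le 2$ for every $x\in[n]$.
   Context: For integers $n\ge 2r$, the Kneser graph $K(n,r)$ has as vertices the $r$-element subsets of $[n]=\{1,\dots,n\}$, two vertices being adjacent iff they are disjoint. A $2$-packing of a graph $G$ is a set of vertices pairwise at distance at least $3$ in $G$; $\rho_2(G)$ is the maximum cardinality of a $2$-packing. For a set $S$ of vertices of $K(n,r)$ and $x\in[n]$, $i_x(S)=|\{u\in S: x\in u\}|$ is the number of vertices of $S$ containing $x$. *)

From mathcomp Require Import all_boot all_order.
Set Implicit Arguments.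
Unset Strict Implicit.
Unset Printing Implicit Defensive.

(* Vertices of the Kneser graph K(n,r): r-element subsets of [n],
   where [n] = {1..n} is represented by 'I_n = {0..n-1}. *)
Definition kvert (n r : nat) := {A : {set 'I_n} | #|A| == r}.

Definition kadj (n r : nat) (u v : kvert n r) : bool :=
  [disjoint val u & val v].

Definition kdist_ge3 (n r : nat) (u v : kvert n r) : bool :=
  [&& u != v, ~~ kadj u v & ~~ [exists w : kvert n r, kadj u w && kadj w v]].

Definition two_packing (n r : nat) (S : {set kvert n r}) : bool :=
  [forall u in S, forall v in S, (u != v) ==> kdist_ge3 u v].

Definition rho2_ge (n r k : nat) : Prop :=
  exists S : {set kvert n r}, two_packing S /\ k <= #|S|.

Definition i_x (n r : nat) (S : {set kvert n r}) (x : 'I_n) : nat :=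
  #|[set u in S | x \in val u]|.

From mathcomp Require Import all_boot all_order zify.

(* Two r-sets of [n] have a common neighbour in K(n,r) iff their union leaves
   at least r points free, so they are at distance at least 3 iff they meet in
   c points with 0 < c < r and n + c < 3r; for n = 3r - t this means
   1 <= c <= t - 1.  By the Bonferroni inequality, four such sets force
   4r <= n + 6(t - 1), i.e. r + 6 <= 5t.  This leaves room for the following
   design: six blocks of size t - 1 indexed by the pairs of {1,2,3,4}, and four
   private blocks of size r - 3(t - 1); the i-th set is the union of the blocks
   of the pairs containing i and of the i-th private block.  Any two of these
   sets share exactly one block and every point lies in at most two of them. *)

Lemma exists_subset_card {T : finType} {A : {set T}} {k} :
  k <= #|A| -> exists2 B : {set T}, B \subset A & #|B| = k.
Proof.
rewrite -bin_gt0 -cards_draws => /card_gt0P [B].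
by rewrite inE => /andP [sBA /eqP cardB]; exists B.
Qed.

Section Bonferroni.

Variable T : finType.

Lemma card_bigcup_le (I : Type) (s : seq I) (P : pred I) (F : I -> {set T}) :
  #|\bigcup_(i <- s | P i) F i| <= \sum_(i <- s | P i) #|F i|.
Proof.
elim/big_rec2: _ => [|i c U _ le_Uc]; first by rewrite cards0.
by rewrite (leq_trans (leq_card_setU _ _)) ?leq_add2l.
Qed.

Lemma sum_card_le_bigcup_pairs (k : nat) (F : nat -> {set T}) :
  \sum_(i < k) #|F i| <=
  #|\bigcup_(i < k) F i| + \sum_(i < k) \sum_(j < i) #|F i :&: F j|.
Proof.
elim: k => [|k IHk]; first by rewrite !big_ord0 cards0.
rewrite !big_ord_recr /=; set U := \bigcup_(i < k) F i in IHk *.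
have capU : #|U :&: F k| <= \sum_(j < k) #|F k :&: F j|.
  have sub : U :&: F k \subset \bigcup_(j < k) (F k :&: F j).
    apply/subsetP => x /setIP [/bigcupP [j _ xFj] xFk].
    by apply/bigcupP; exists j; rewrite ?inE ?xFk.
  by apply: leq_trans (subset_leq_card sub) _; apply: card_bigcup_le.
apply: leq_trans (leq_add IHk (leqnn #|F k|)) _.
by rewrite addnAC -cardsUI -addnA leq_add2l addnC leq_add2l.
Qed.

End Bonferroni.

Lemma sum_triangle_const (k c : nat) :
  \sum_(i < k) \sum_(j < i) c = 'C(k, 2) * c.
Proof.
under eq_bigr do rewrite big_const_ord iter_addn_0.
by rewrite -big_distrr -(big_mkord xpredT (fun i => i)) bin2_sum mulnC.
Qed.

Section Kneser.

Variables n r : nat.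

Lemma kadj_common_neighbourE (u v : kvert n r) :
  [exists w : kvert n r, kadj u w && kadj w v] =
  (r <= #|~: (val u :|: val v)|).
Proof.
have disjoint_union (W : {set 'I_n}) :
    [disjoint val u & W] && [disjoint W & val v] = (W \subset ~: (val u :|: val v)).
  by rewrite setCU subsetI -!disjoints_subset disjoint_sym.
apply/existsP/idP => [[w] | /exists_subset_card [W sW /eqP cardW]].
  rewrite /kadj disjoint_union => /subset_leq_card.
  by rewrite (eqP (valP w)).
by exists (exist _ W cardW); rewrite /kadj disjoint_union.
Qed.

Lemma kvert_neqE (u v : kvert n r) : (u != v) = (#|val u :&: val v| < r).
Proof.
have [cu cv] := (eqP (valP u), eqP (valP v)).
rewrite ltn_neqAle -[X in _ <= X]cu subset_leq_card ?subsetIl // andbT.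
rewrite -(inj_eq val_inj); congr negb; apply/eqP/eqP => [-> | cI].
  by rewrite setIid cv.
have /eqP Iu : val u :&: val v == val u by rewrite eqEcard subsetIl cu cI leqnn.
have /eqP Iv : val u :&: val v == val v by rewrite eqEcard subsetIr cv cI leqnn.
by rewrite -Iu Iv.
Qed.

Lemma kadjE (u v : kvert n r) : kadj u v = (#|val u :&: val v| == 0).
Proof. by rewrite cards_eq0 setI_eq0. Qed.

Lemma kdist_ge3E (u v : kvert n r) :
  kdist_ge3 u v =
  [&& 0 < #|val u :&: val v|, #|val u :&: val v| < r
    & n + #|val u :&: val v| < 3 * r].
Proof.
rewrite /kdist_ge3 kvert_neqE kadjE kadj_common_neighbourE -lt0n -ltnNge.
have := cardsUI (val u) (val v); have := cardsC (val u :|: val v).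
rewrite card_ord (eqP (valP u)) (eqP (valP v)) => hC hU.
have -> : (#|~: (val u :|: val v)| < r) = (n + #|val u :&: val v| < 3 * r).
  by apply/idP/idP; lia.
by rewrite andbCA.
Qed.

Lemma two_packingP {S : {set kvert n r}} {u v} :
  two_packing S -> u \in S -> v \in S -> u != v -> kdist_ge3 u v.
Proof.
move=> packS uS vS; move/forallP/(_ u): packS; rewrite uS => /forallP/(_ v).
by rewrite vS /= => /implyP.
Qed.

Lemma two_packingS {S T : {set kvert n r}} :
  T \subset S -> two_packing S -> two_packing T.
Proof.
move=> /subsetP sTS packS; apply/forallP => u; apply/implyP => uT.
apply/forallP => v; apply/implyP => vT; apply/implyP.
exact: two_packingP packS (sTS u uT) (sTS v vT).
Qed.

Lemma two_packing_card_bound (S : {set kvert n r}) : two_packing S ->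
  #|S| * r <= n + 'C(#|S|, 2) * (3 * r - n).-1.
Proof.
move=> packS; pose s := [seq val u | u <- enum S]; pose F := nth set0 s.
have size_s : size s = #|S| by rewrite size_map cardE.
have uniq_s : uniq s by rewrite (map_inj_uniq val_inj) enum_uniq.
have F_in i : i < #|S| -> exists2 u, u \in S & F i = val u.
  rewrite -size_s => /(mem_nth set0) /mapP [u].
  by rewrite mem_enum => uS Fi; exists u.
have capF (i j : nat) : j < i < #|S| -> #|F i :&: F j| <= (3 * r - n).-1.
  move=> /andP [lt_ji lt_iS]; have lt_jS := ltn_trans lt_ji lt_iS.
  have [u uS Fi] := F_in i lt_iS; have [v vS Fj] := F_in j lt_jS.
  have : F i != F j by rewrite nth_uniq ?size_s // gtn_eqF.
  rewrite Fi Fj (inj_eq val_inj) => neq_uv.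
  have := two_packingP packS uS vS neq_uv; rewrite kdist_ge3E -Fi -Fj => /and3P [_ _].
  lia.
have := sum_card_le_bigcup_pairs _ #|S| F.
rewrite (eq_bigr (fun=> r)) => [|i _]; last first.
  by have [u _ ->] := F_in i (ltn_ord i); apply/eqP/(valP u).
rewrite sum_nat_const card_ord => /leq_trans; apply.
rewrite -sum_triangle_const leq_add //; first by rewrite -[n in _ <= n]card_ord max_card.
by apply: leq_sum => i _; apply: leq_sum => j _; apply: capF; rewrite !ltn_ord.
Qed.

Lemma rho2_ge_bound k :
  rho2_ge n r k -> k * r <= n + 'C(k, 2) * (3 * r - n).-1.
Proof.
move=> [S [packS le_kS]]; have [T sTS cardT] := exists_subset_card le_kS.
by rewrite -cardT; apply: two_packing_card_bound; apply: two_packingS sTS packS.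
Qed.

Lemma two_packing_of_family (I T : finType) (F : I -> {set T}) d :
  #|T| <= n -> (forall i, #|F i| = r) ->
  (forall i j, i != j ->
     [&& 0 < #|F i :&: F j|, #|F i :&: F j| < r & n + #|F i :&: F j| < 3 * r]) ->
  (forall x, #|[set i | x \in F i]| <= d) ->
  exists S : {set kvert n r}, [/\ two_packing S, #|S| = #|I| & forall y, i_x S y <= d].
Proof.
move=> le_Tn cardF capF degF.
pose f (x : T) : 'I_n := widen_ord le_Tn (enum_rank x).
have inj_f : injective f by move=> x y /(congr1 val) /= /val_inj; apply: enum_rank_inj.
have cardV i : #|f @: F i| == r by rewrite card_imset ?cardF.
pose V i : kvert n r := exist _ (f @: F i) (cardV i).
have distV i j : i != j -> kdist_ge3 (V i) (V j).
  move=> neq_ij; rewrite kdist_ge3E /= -imsetI ?card_imset ?capF //.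
  by move=> x y _ _; apply: inj_f.
have inj_V : injective V.
  move=> i j eq_V; apply/eqP; apply: contraT => /distV.
  by rewrite eq_V /kdist_ge3 eqxx.
exists (V @: setT); split.
- apply/forallP => u; apply/implyP => /imsetP [i _ ->].
  apply/forallP => v; apply/implyP => /imsetP [j _ ->].
  by apply/implyP => neq_V; apply: distV; apply: contraNneq neq_V => ->.
- by rewrite card_imset // cardsT.
- move=> y; apply: leq_trans (_ : #|[set i | y \in f @: F i]| <= d).
    rewrite /i_x -(card_imset _ inj_V); apply: subset_leq_card.
    apply/subsetP => u; rewrite !inE => /andP [/imsetP [i _ ->] yVi].
    by apply/imsetP; exists i; rewrite ?inE.
  have [x /eqP <- | not_im] := pickP (fun x => f x == y).
    suff -> : [set i | f x \in f @: F i] = [set i | x \in F i] by apply: degF.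
    by apply/setP => i; rewrite !inE mem_imset.
  rewrite (eq_card0 (A := [set i | y \in f @: F i])) // => i; rewrite inE.
  by apply/imsetP => -[x _ yx]; have := not_im x; rewrite yx eqxx.
Qed.

End Kneser.

Lemma card_sum_set (T1 T2 : finType) (A : {set T1 + T2}) :
  #|A| = #|[set y | inl y \in A]| + #|[set z | inr z \in A]|.
Proof. by rewrite -sum1_card big_sumType !sum1dep_card. Qed.

Lemma card_fst_set (T1 T2 : finType) (P : pred T1) (A : {set T1 * T2}) :
  (forall x, (x \in A) = P x.1) -> #|A| = #|[set y | P y]| * #|T2|.
Proof.
by move=> AP; rewrite -cardsT -cardsX; apply: eq_card => -[a b]; rewrite AP !inE andbT.
Qed.

Lemma card_sig_set (T : finType) (P Q : pred T) :
  #|[set x : {x | P x} | Q (val x)]| = #|[set x | P x & Q x]|.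
Proof.
rewrite -(card_imset _ val_inj); apply: eq_card => x; rewrite inE.
apply/imsetP/andP => [[y] | [Px Qx]].
  by rewrite inE => Qy ->; split=> //; apply: valP.
by exists (exist _ x Px); rewrite ?inE.
Qed.

Lemma card_pairs_containing (T : finType) (i : T) :
  #|[set B : {set T} | #|B| == 2 & i \in B]| = #|T|.-1.
Proof.
have := cardsID [set B : {set T} | i \in B] [set B : {set T} | #|B| == 2].
have -> : [set B : {set T} | #|B| == 2] :&: [set B : {set T} | i \in B] =
          [set B : {set T} | #|B| == 2 & i \in B].
  by apply/setP => B; rewrite !inE.
have -> : [set B : {set T} | #|B| == 2] :\: [set B : {set T} | i \in B] =
          [set B : {set T} | B \subset [set~ i] & #|B| == 2].
  by apply/setP => B; rewrite !inE subsetC sub1set inE andbC.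
rewrite cards_draws card_draws cardsC1.
have [k ->] : exists k, #|T| = k.+1.
  by exists #|T|.-1; rewrite prednK //; apply/card_gt0P; exists i.
rewrite binS bin1 /=; lia.
Qed.

Lemma card_pairs_containing2 (T : finType) (i j : T) : i != j ->
  #|[set B : {set T} | #|B| == 2 & (i \in B) && (j \in B)]| = 1.
Proof.
move=> neq_ij; apply/eqP/cards1P; exists [set i; j]; apply/setP => B; rewrite !inE.
apply/idP/eqP => [/and3P [/eqP cardB iB jB] | ->].
  apply/esym/eqP; rewrite eqEcard cards2 neq_ij cardB leqnn andbT.
  by rewrite subUset !sub1set iB jB.
by rewrite cards2 neq_ij !inE !eqxx orbT.
Qed.

Section Design.

Variables m s p : nat.

Definition design_point := (kvert m 2 * 'I_s + 'I_m * 'I_p)%type.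

Definition design_owners (x : design_point) : {set 'I_m} :=
  match x with inl b => val b.1 | inr q => [set q.1] end.

Definition design_block (i : 'I_m) : {set design_point} :=
  [set x | i \in design_owners x].

Lemma card_design_point : #|{: design_point}| = 'C(m, 2) * s + m * p.
Proof.
rewrite card_sum !card_prod card_sig !card_ord -[m in 'C(m, 2)]card_ord -card_draws.
by congr (_ * _ + _); apply: eq_card => B; rewrite !inE.
Qed.

Lemma card_design_block i : #|design_block i| = m.-1 * s + p.
Proof.
rewrite card_sum_set (card_fst_set _ _ (fun B : kvert m 2 => i \in val B)); last first.
  by move=> y; rewrite !inE.
rewrite (card_fst_set _ _ (pred1 i)); last by move=> z; rewrite !inE eq_sym.
rewrite (card_sig_set _ _ (fun B : {set 'I_m} => i \in B)) card_pairs_containing.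
have -> : [set k | pred1 i k] = [set i] by apply/setP => k; rewrite !inE.
by rewrite cards1 !card_ord mul1n.
Qed.

Lemma card_design_blockI i j : i != j -> #|design_block i :&: design_block j| = s.
Proof.
move=> neq_ij; rewrite card_sum_set.
pose P (B : kvert m 2) := (i \in val B) && (j \in val B).
rewrite (card_fst_set _ _ P); last first.
  by move=> y; rewrite !inE.
rewrite (card_fst_set _ _ pred0); last first.
  move=> z; rewrite !inE; apply/negbTE.
  by apply: contra neq_ij => /andP [/eqP <- /eqP <-].
rewrite (card_sig_set _ _ (fun B : {set 'I_m} => (i \in B) && (j \in B))).
have -> : [set k : 'I_m | pred0 k] = set0 by apply/setP => k; rewrite !inE.
by rewrite card_pairs_containing2 // cards0 card_ord mul1n addn0.
Qed.

Lemma design_block_degree x : #|[set i | x \in design_block i]| <= 2.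
Proof.
have -> : [set i | x \in design_block i] = design_owners x.
  by apply/setP => i; rewrite !inE.
by case: x => [b | q] /=; rewrite ?cards1 // (eqP (valP b.1)).
Qed.

End Design.

Lemma design_two_packing m s p n r :
  0 < s -> 2 < m -> r = m.-1 * s + p ->
  'C(m, 2) * s + m * p <= n -> n + s < 3 * r ->
  exists S : {set kvert n r},
    [/\ two_packing S, #|S| = m & forall x, i_x S x <= 2].
Proof.
move=> s_gt0 m_gt2 def_r le_n lt_n.
have lt_sr : s < r.
  have : 2 * s <= m.-1 * s by rewrite leq_mul2r; apply/orP; right; lia.
  lia.
have := two_packing_of_family n r _ _ (design_block m s p) 2; rewrite card_ord; apply.
- by rewrite card_design_point.
- by move=> i; rewrite card_design_block.
- by move=> i j neq_ij; rewrite card_design_blockI // s_gt0 lt_sr.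
- exact: design_block_degree.
Qed.

Theorem lemma4p6 (r t : nat) :
  3 <= r -> 2 <= t -> 3 * t <= r + 3 ->
  rho2_ge (3 * r - t) r 4 ->
  exists S : {set kvert (3 * r - t) r},
    [/\ two_packing S, #|S| = 4 & forall x : 'I_(3 * r - t), i_x S x <= 2].
Proof.
(* 3 <= r follows from 2 <= t and 3 * t <= r + 3. *)
move=> _ t_ge2 le_t /rho2_ge_bound.
have bin42 : 'C(4, 2) = 6 by [].
rewrite bin42 => bound.
apply: (design_two_packing 4 t.-1 (r - 3 * t.-1)); rewrite ?bin42 /=; lia.
Qed.
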